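(* Let $G=(V,E)$ be a connected undirected graph with labeled nodes $1,\dots,n_l$ ($1\le n_l<n$) and edge costs $d_e>0$, and let $p$ be an unlabeled node. Suppose there is a unique path of minimal total cost $\sum_e d_e$ among all paths from the set of labeled nodes to $p$, and let $i^*(p)$ be its labeled endpoint. Then as $\lambda\to\infty$, the flow-based prediction weights satisfy $w_{i^*(p)}(p)\to1$ and $w_i(p)\to0$ for all $i\ne i^*(p)$; i.e. the flow-based prediction converges to the 1-nearest-neighbor prediction $f(i^*(p))$ (nearest with respect to shortest-path distance with edge lengths $d_e$).
   Context: Orient each edge arbitrarily; let $A$ be the $n\times m$ signed incidence matrix ($A_{ie}=+1$, $A_{je}=-1$ for $e$ oriented from $i$ to $j$), $A_l$ its rows $1,\dots,n_l$, $A_u$ its remaining rows. For unlabeled $p$, $\vec b_p\in\mathbb R^{n-n_l}$ is zero except $-1$ at the entry of $p$. For $\lambda\ge0$, the flow $\vec x$ is the unique minimizer of $\frac12\sum_{e=1}^m d_e(x_e^2+\lambda|x_e|)$ subject to $A_u\vec x=\vec b_p$; the weights are $\vec w(p)=A_l\vec x$ and the prediction is $f(p)=\sum_{i=1}^{n_l}w_i(p)f(i)$. *)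

From HB Require Import structures.
From mathcomp Require Import all_boot all_order all_algebra.
Set Implicit Arguments. Unset Strict Implicit. Unset Printing Implicit Defensive.
Import Order.TTheory GRing.Theory Num.Theory.
Local Open Scope ring_scope.

(* Graph on nodes 'I_n with m edges; edge e is oriented from src e to dst e.
   Labeled nodes are those with index < nl. *)

Definition incidence (R : ringType) (n m : nat) (src dst : 'I_m -> 'I_n)
  : 'M[R]_(n, m) :=
  \matrix_(i < n, e < m) ((i == src e)%:R - (i == dst e)%:R).

Definition simple_graph (n m : nat) (src dst : 'I_m -> 'I_n) : Prop :=
  (forall e, src e != dst e) /\
  (forall e e', (src e == src e') && (dst e == dst e')
                || (src e == dst e') && (dst e == src e') -> e = e').

Definition is_path (n m : nat) (src dst : 'I_m -> 'I_n)
  (vs : seq 'I_n) (es : seq 'I_m) : Prop :=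
  size vs = (size es).+1 /\ uniq vs /\
  forall k x0 e0, (k < size es)%N ->
    let e := nth e0 es k in
    (src e == nth x0 vs k) && (dst e == nth x0 vs k.+1)
    || (dst e == nth x0 vs k) && (src e == nth x0 vs k.+1).

Definition connected_graph (n m : nat) (src dst : 'I_m -> 'I_n) : Prop :=
  forall u v : 'I_n, exists vs es,
    is_path src dst vs es /\ head u vs = u /\ last u vs = v.

Definition path_cost (R : nmodType) (m : nat) (d : 'I_m -> R) (es : seq 'I_m) : R :=
  \sum_(e <- es) d e.

Definition labeled_path_to (n m nl : nat) (src dst : 'I_m -> 'I_n) (p : 'I_n)
  (vs : seq 'I_n) (es : seq 'I_m) : Prop :=
  is_path src dst vs es /\ (head p vs < nl)%N /\ last p vs = p.

Definition unique_shortest_labeled_path (R : numDomainType) (n m nl : nat)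
  (src dst : 'I_m -> 'I_n) (d : 'I_m -> R) (p : 'I_n)
  (vs : seq 'I_n) (es : seq 'I_m) : Prop :=
  labeled_path_to nl src dst p vs es /\
  forall vs' es', labeled_path_to nl src dst p vs' es' ->
    path_cost d es <= path_cost d es' /\
    (path_cost d es' = path_cost d es -> vs' = vs /\ es' = es).

Definition flow_objective (R : numDomainType) (m : nat) (d : 'I_m -> R) (lam : R)
  (x : 'cV[R]_m) : R :=
  2^-1 * \sum_(e < m) d e * (x e 0 ^+ 2 + lam * `|x e 0|).

(* A_u x = b_p : for unlabeled rows i (i >= nl), (A x)_i = -1 if i = p, else 0 *)
Definition unlabeled_constraint (R : ringType) (n m nl : nat)
  (src dst : 'I_m -> 'I_n) (p : 'I_n) (x : 'cV[R]_m) : Prop :=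
  forall i : 'I_n, (nl <= i)%N ->
    (incidence R src dst *m x) i 0 = - (i == p)%:R.

Definition is_flow (R : numDomainType) (n m nl : nat) (src dst : 'I_m -> 'I_n)
  (d : 'I_m -> R) (p : 'I_n) (lam : R) (x : 'cV[R]_m) : Prop :=
  unlabeled_constraint nl src dst p x /\
  forall y, unlabeled_constraint nl src dst p y ->
    flow_objective d lam x <= flow_objective d lam y.

Definition flow_weight (R : ringType) (n m : nat) (src dst : 'I_m -> 'I_n)
  (x : 'cV[R]_m) (i : 'I_n) : R :=
  (incidence R src dst *m x) i 0.

From HB Require Import structures.
From mathcomp Require Import all_boot all_order all_algebra.
From mathcomp Require Import lra.
From Stdlib Require Import Classical_Prop.
Set Implicit Arguments. Unset Strict Implicit. Unset Printing Implicit Defensive.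
Import Order.TTheory GRing.Theory Num.Theory.
Local Open Scope ring_scope.

(* Weak duality: a potential phi with |phi(src e) - phi(dst e)| <= d_e satisfies
   phi(p) - sum_{j labeled} phi(j) w_j(y) <= sum_e d_e |y_e| for every feasible y.
   Comparing the optimal flow x with the unit flow along the shortest path gives
   lam * sum_e d_e |x_e| <= C + lam * D, where D is the shortest distance and C the
   quadratic cost of the path flow.  For |s| small, the shortest-distance potential
   with initial height s at the labeled node i and 0 at the other labeled nodes keeps
   these heights on the labeled nodes (every edge is longer than 2|s|) and is at least
   D + s [i = i*] at p (every other labeled path to p is longer than D + 2|s|).  Hence
   lam s ([i = i*] - w_i) <= C for s = t and s = -t, i.e. |w_i - [i = i*]| <= C / (lam t). *)

Lemma exists_minimizer_in_seq (R : realDomainType) (T : eqType) (s : seq T)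
    (P : T -> Prop) (f : T -> R) :
  (exists2 a, a \in s & P a) ->
  exists a, [/\ a \in s, P a & forall b, b \in s -> P b -> f a <= f b].
Proof.
elim: s => [|x s IH] [a]; first by [].
have min_cons b : b \in s -> P b -> (forall c, c \in s -> P c -> f b <= f c) ->
    P x -> exists a, [/\ a \in x :: s, P a & forall c, c \in x :: s -> P c -> f a <= f c].
  move=> bs Pb bmin Px; have [le_bx|lt_xb] := leP (f b) (f x).
    exists b; split; rewrite ?inE ?bs ?orbT // => c /predU1P[-> //|]; exact: bmin.
  exists x; split; rewrite ?mem_head // => c /predU1P[-> //|cs Pc].
  exact: le_trans (ltW lt_xb) (bmin c cs Pc).
rewrite inE => /predU1P[-> Px|a_s Pa].
  case: (classic (exists2 b, b \in s & P b)) => [/IH[b [bs Pb bmin]]|none].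
    exact: min_cons bs Pb bmin Px.
  exists x; split; rewrite ?mem_head // => c /predU1P[-> //|cs Pc].
  by case: none; exists c.
have [b [bs Pb bmin]] := IH (ex_intro2 _ _ a a_s Pa).
case: (classic (P x)) => [|nPx]; first exact: min_cons bs Pb bmin.
exists b; split; rewrite ?inE ?bs ?orbT // => c /predU1P[-> //|]; exact: bmin.
Qed.

Lemma sum_mul_delta (R : pzSemiRingType) (T : finType) (f : T -> R) (a : T) :
  \sum_v f v * (v == a)%:R = f a.
Proof.
rewrite (bigD1 a) //= eqxx mulr1 big1 ?addr0 // => v /negbTE->.
by rewrite mulr0.
Qed.

Fixpoint bounded_seqs (T : finType) (L : nat) : seq (seq T) :=
  if L is L'.+1 then [::] :: [seq x :: s | x <- enum T, s <- bounded_seqs T L']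
  else [:: [::]].

Lemma mem_bounded_seqs (T : finType) L (s : seq T) :
  (size s <= L)%N -> s \in bounded_seqs T L.
Proof.
elim: L s => [|L IH] [|x s] //=; rewrite ?inE // ltnS => size_s.
by rewrite allpairs_f ?orbT ?mem_enum ?IH.
Qed.

Definition path_candidates (n m : nat) : seq (seq 'I_n * seq 'I_m) :=
  [seq (vs, es) | vs <- bounded_seqs 'I_n n, es <- bounded_seqs 'I_m n].

Section Paths.
Variables (n m nl : nat) (src dst : 'I_m -> 'I_n).

Definition joins (e : 'I_m) (a b : 'I_n) :=
  (src e == a) && (dst e == b) || (dst e == a) && (src e == b).

Lemma path_in_candidates vs es :
  is_path src dst vs es -> (vs, es) \in path_candidates n m.
Proof.
case=> size_vs [uniq_vs _].
have size_vs_n : (size vs <= n)%N.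
  by move/card_uniqP: uniq_vs => <-; rewrite -[leqRHS](card_ord n) max_card.
apply: (allpairs_f pair); apply: mem_bounded_seqs => //.
by apply: ltnW; rewrite -size_vs.
Qed.

Lemma path_nonnil vs es : is_path src dst vs es -> vs != [::].
Proof. by case: vs => [[]|]. Qed.

Lemma is_path_take k vs es : is_path src dst vs es -> (k < size vs)%N ->
  is_path src dst (take k.+1 vs) (take k es).
Proof.
case=> size_vs [uniq_vs edges] k_vs; move: (k_vs); rewrite size_vs ltnS => k_es.
split; [|split]; first by rewrite !size_take size_vs ltnS; case: ltngtP k_es.
  exact: take_uniq.
move=> j x0 e0; rewrite size_take_min leq_min => /andP[j_k j_es].
by rewrite !nth_take ?ltnS ?(ltnW j_k) //; exact: edges.
Qed.

Lemma is_path_rcons vs es e b x0 : is_path src dst vs es ->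
  joins e (last x0 vs) b -> b \notin vs ->
  is_path src dst (rcons vs b) (rcons es e).
Proof.
case=> size_vs [uniq_vs edges] e_joins b_vs.
split; [|split]; rewrite ?size_rcons ?size_vs ?rcons_uniq ?b_vs //.
move=> j y0 e0; rewrite ltnS leq_eqVlt => /predU1P[->|j_es].
  rewrite !nth_rcons ltnn eqxx -size_vs ltnn eqxx size_vs ltnSn.
  suff -> : nth y0 vs (size es) = last x0 vs by [].
  by rewrite -nth_last size_vs; apply: set_nth_default; rewrite size_vs.
by rewrite !nth_rcons j_es size_vs (ltn_trans j_es) // ltnS j_es; apply: edges.
Qed.

Lemma connected_labeled_paths : (0 < nl)%N -> (nl < n)%N ->
  connected_graph src dst -> forall v, exists vs es, labeled_path_to nl src dst v vs es.
Proof.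
move=> nl_gt0 nl_lt_n conn v.
have [vs [es [path_vs [head_vs last_vs]]]] := conn (Ordinal (ltn_trans nl_gt0 nl_lt_n)) v.
exists vs, es; split=> //; move: (path_nonnil path_vs) head_vs last_vs.
by case: vs {path_vs} => //= a s _ ->.
Qed.

Section Costs.
Variables (R : numDomainType) (d : 'I_m -> R).
Hypothesis d_gt0 : forall e, 0 < d e.

Lemma path_cost_ge0 es : 0 <= path_cost d es.
Proof. by apply: sumr_ge0 => e _; exact: ltW. Qed.

Lemma path_cost_take k es : path_cost d (take k es) <= path_cost d es.
Proof.
rewrite /path_cost -{2}(cat_take_drop k es) big_cat /= lerDl.
exact: path_cost_ge0.
Qed.

Lemma path_cost_cons_ge e es (c : R) : (forall e', c <= d e') ->
  c <= path_cost d (e :: es).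
Proof.
move=> c_le; rewrite /path_cost big_cons.
by apply: le_trans (c_le e) _; rewrite lerDl path_cost_ge0.
Qed.

Lemma labeled_path_step a b e vs es :
  labeled_path_to nl src dst a vs es -> joins e a b ->
  exists vs' es', [/\ labeled_path_to nl src dst b vs' es',
    head b vs' = head a vs & path_cost d es' <= path_cost d es + d e].
Proof.
move=> [path_vs [head_vs last_vs]] e_ab; have vs_nil := path_nonnil path_vs.
case: (boolP (b \in vs)) => b_vs.
  set k := index b vs; have k_vs : (k < size vs)%N by rewrite index_mem.
  exists (take k.+1 vs), (take k es); split.
  - split; first exact: is_path_take.
    split; last by rewrite -nth_last (size_takel k_vs) nth_take // nth_index.
    by move: head_vs; case: (vs) vs_nil.
  - by case: (vs) vs_nil.
  - by apply: le_trans (path_cost_take k es) _; rewrite lerDl ltW.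
exists (rcons vs b), (rcons es e); split.
- split; last by rewrite last_rcons; move: head_vs; case: (vs) vs_nil.
  by rewrite -{1}last_vs in e_ab; exact: is_path_rcons e_ab b_vs.
- by case: (vs) vs_nil.
- by rewrite /path_cost big_rcons.
Qed.

End Costs.
End Paths.

Lemma sum_over_fibers (V : nmodType) (I T : finType) (f : I -> T) (G : I -> T -> V) :
  \sum_t \sum_(i | f i == t) G i t = \sum_i G i (f i).
Proof.
rewrite (exchange_big_dep xpredT) //=; apply: eq_bigr => i _.
by apply: big_pred1 => t; rewrite /= eq_sym.
Qed.

Definition l1_cost (R : numDomainType) m (d : 'I_m -> R) (y : 'cV[R]_m) : R :=
  \sum_e d e * `|y e 0|.

Definition quadratic_cost (R : numDomainType) m (d : 'I_m -> R) (y : 'cV[R]_m) : R :=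
  \sum_e d e * y e 0 ^+ 2.

Section Incidence.
Variables (n m : nat) (src dst : 'I_m -> 'I_n).

Lemma incidence_mulE (R : nzRingType) (y : 'cV[R]_m) v :
  (incidence R src dst *m y) v 0 = \sum_e ((v == src e)%:R - (v == dst e)%:R) * y e 0.
Proof. by rewrite mxE; apply: eq_bigr => e _; rewrite mxE. Qed.

Lemma potential_incidence_sum (R : nzRingType) (phi : 'I_n -> R) (y : 'cV[R]_m) :
  \sum_v phi v * (incidence R src dst *m y) v 0 = \sum_e (phi (src e) - phi (dst e)) * y e 0.
Proof.
under eq_bigr => v _ do rewrite incidence_mulE mulr_sumr.
rewrite exchange_big /=; apply: eq_bigr => e _.
under eq_bigr => v _ do rewrite mulrA.
by rewrite -mulr_suml; under eq_bigr => v _ do rewrite mulrBr; rewrite sumrB !sum_mul_delta.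
Qed.

Variables (R : realFieldType) (d : 'I_m -> R).

Definition edge_lipschitz (phi : 'I_n -> R) := forall e, `|phi (src e) - phi (dst e)| <= d e.

Lemma labeled_potential_duality nl (p : 'I_n) (phi : 'I_n -> R) (y : 'cV[R]_m) : (nl <= p)%N ->
  edge_lipschitz phi -> unlabeled_constraint nl src dst p y ->
  phi p - \sum_(j < n | (j < nl)%N) phi j * flow_weight src dst y j <= l1_cost d y.
Proof.
move=> p_unl lip_phi feas_y.
have split_sum : \sum_v phi v * flow_weight src dst y v =
    \sum_(j < n | (j < nl)%N) phi j * flow_weight src dst y j - phi p.
  rewrite (bigID (fun j : 'I_n => (j < nl)%N)) /=; congr (_ + _).
  rewrite (bigD1 p) -?leqNgt //= /flow_weight feas_y // eqxx mulrN1 big1 ?addr0 //.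
  by move=> v /andP[v_unl /negbTE v_p]; rewrite feas_y ?v_p ?oppr0 ?mulr0 // leqNgt.
have -> : phi p - \sum_(j < n | (j < nl)%N) phi j * flow_weight src dst y j =
    \sum_e (phi (dst e) - phi (src e)) * y e 0.
  rewrite -opprB -split_sum potential_incidence_sum -sumrN.
  by apply: eq_bigr => e _; rewrite -mulNr opprB.
apply: ler_sum => e _; apply: le_trans (ler_norm _) _.
by rewrite normrM distrC ler_wpM2r.
Qed.

End Incidence.

Section OffsetDistance.
Variables (R : realFieldType) (n m nl : nat) (src dst : 'I_m -> 'I_n) (d : 'I_m -> R).
Hypothesis d_gt0 : forall e, 0 < d e.
Variable off : 'I_n -> R.

Definition offset_cost (v : 'I_n) vs es := off (head v vs) + path_cost d es.

Definition offset_distance (phi : 'I_n -> R) := forall v,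
  (exists vs es, labeled_path_to nl src dst v vs es /\ phi v = offset_cost v vs es) /\
  (forall vs es, labeled_path_to nl src dst v vs es -> phi v <= offset_cost v vs es).

Lemma exists_offset_distance :
  (forall v, exists vs es, labeled_path_to nl src dst v vs es) ->
  exists phi, offset_distance phi.
Proof.
move=> reach.
suff min_at v : exists r, (exists vs es, labeled_path_to nl src dst v vs es /\ r = offset_cost v vs es) /\
    (forall vs es, labeled_path_to nl src dst v vs es -> r <= offset_cost v vs es).
  by have [phi] := fin_all_exists min_at; exists phi.
have [vs [es path_v]] := reach v.
have [[vs' es'] [_ path_v' min']] := exists_minimizer_in_seq
  (fun P => offset_cost v P.1 P.2)
  (ex_intro2 (fun P => P \in path_candidates n m)
     (fun P => labeled_path_to nl src dst v P.1 P.2) (vs, es)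
     (path_in_candidates path_v.1) path_v).
exists (offset_cost v vs' es'); split; first by exists vs', es'.
by move=> vs'' es'' path_v''; apply: (min' (vs'', es'') (path_in_candidates path_v''.1)).
Qed.

Lemma offset_distance_lipschitz phi : offset_distance phi -> edge_lipschitz src dst d phi.
Proof.
move=> dist_phi.
have step a b e : joins src dst e a b -> phi b <= phi a + d e.
  move=> e_ab; have [[vs [es [path_a ->]]] _] := dist_phi a.
  have [vs' [es' [path_b head_b cost_b]]] := labeled_path_step d_gt0 path_a e_ab.
  apply: le_trans ((dist_phi b).2 _ _ path_b) _.
  by rewrite /offset_cost head_b -addrA lerD2l.
move=> e; have := step (src e) (dst e) e; have := step (dst e) (src e) e.
rewrite /joins !eqxx orbT /= => le1 le2; rewrite ler_norml.
by have := le1 isT; have := le2 isT; move=> *; apply/andP; split; lra.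
Qed.

Variable t : R.
Hypotheses (off_le : forall j, `|off j| <= t) (d_ge : forall e, 2 * t <= d e).

Lemma offset_distance_labeled phi : offset_distance phi ->
  forall j : 'I_n, (j < nl)%N -> phi j = off j.
Proof.
move=> dist_phi j j_lab.
have [[vs [es [[[size_vs _] [_ last_vs]] phi_j]]] phi_min] := dist_phi j.
apply/eqP; rewrite eq_le; apply/andP; split.
  have trivial_path : labeled_path_to nl src dst j [:: j] [::] by [].
  have := phi_min _ _ trivial_path.
  by rewrite /offset_cost /path_cost big_nil addr0.
rewrite phi_j /offset_cost {phi_j}; case: es size_vs => [|e es] size_vs.
  by case: vs size_vs last_vs => [|a []] //= _ ->; rewrite /path_cost big_nil addr0.
have := path_cost_cons_ge d_gt0 e es d_ge.
have := off_le j; have := off_le (head j vs); rewrite !ler_norml => /andP[? ?] /andP[? ?].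
lra.
Qed.

Lemma offset_distance_target phi p vs es : offset_distance phi ->
  (forall vs' es', labeled_path_to nl src dst p vs' es' -> (vs', es') <> (vs, es) ->
    path_cost d es + 2 * t <= path_cost d es') ->
  path_cost d es + off (head p vs) <= phi p.
Proof.
move=> dist_phi gap; have [[vs' [es' [path_p ->]]] _] := dist_phi p.
rewrite /offset_cost; case: (classic ((vs', es') = (vs, es))) => [[-> ->]|other].
  by rewrite addrC.
have := gap _ _ path_p other; have := off_le (head p vs'); have := off_le (head p vs).
rewrite !ler_norml => /andP[? ?] /andP[? ?]; lra.
Qed.

End OffsetDistance.

Section PathFlow.
Variables (n m : nat) (src dst : 'I_m -> 'I_n).
Hypothesis no_loop : forall e, src e != dst e.
Variables (vs : seq 'I_n) (es : seq 'I_m).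
Hypothesis path_vs : is_path src dst vs es.

(* The unit flow along the path: the [k]-th step contributes [+1] to its edge if it
   runs from [src e] to [dst e] and [-1] otherwise (the [nth] default is irrelevant). *)
Definition path_flow (R : nzRingType) : 'cV[R]_m :=
  \col_e \sum_(k < size es | tnth (in_tuple es) k == e)
     (if src e == nth (src e) vs k then 1 else -1).

Lemma path_flow_incidence (R : nzRingType) x0 v :
  (incidence R src dst *m path_flow R) v 0 = (v == head x0 vs)%:R - (v == last x0 vs)%:R.
Proof.
case: path_vs => size_vs [_ edges].
have vs_nth k x1 : (k <= size es)%N -> nth x1 vs k = nth x0 vs k.
  by move=> k_es; apply: set_nth_default; rewrite size_vs ltnS.
rewrite incidence_mulE; under eq_bigr => e _ do rewrite mxE mulr_sumr.
rewrite sum_over_fibers.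
transitivity (\sum_(k < size es) ((v == nth x0 vs k)%:R - (v == nth x0 vs k.+1)%:R : R)).
  apply: eq_bigr => k _; set e := tnth _ k.
  have := edges k (src e) e (ltn_ord k); rewrite /= -[nth e es k](tnth_nth e (in_tuple es)) -/e.
  rewrite !vs_nth ?(ltnW (ltn_ord k)) //.
  case/orP => /andP[/eqP src_e /eqP dst_e]; have := no_loop e; rewrite src_e dst_e.
    by rewrite eqxx mulr1.
  by move/negbTE->; rewrite mulrN1 opprB.
rewrite -(big_mkord xpredT (fun k => (v == nth x0 vs k)%:R - (v == nth x0 vs k.+1)%:R)).
rewrite -[LHS]opprK -sumrN; under eq_bigr => k _ do rewrite opprB.
by rewrite telescope_sumr // opprB nth0 -nth_last size_vs.
Qed.

Lemma l1_cost_path_flow (R : realFieldType) (d : 'I_m -> R) : (forall e, 0 < d e) ->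
  l1_cost d (path_flow R) <= path_cost d es.
Proof.
move=> d_gt0.
have -> : path_cost d es = \sum_e \sum_(k < size es | tnth (in_tuple es) k == e) d e * 1.
  by rewrite sum_over_fibers /path_cost big_tnth; apply: eq_bigr => k _; rewrite mulr1.
apply: ler_sum => e _; rewrite -mulr_sumr mxE; apply: ler_wpM2l; first exact: ltW.
apply: le_trans (ler_norm_sum _ _ _) _; apply: ler_sum => k _.
by case: ifP; rewrite ?normrN normr1.
Qed.

End PathFlow.

Lemma flow_objectiveE (R : realFieldType) m (d : 'I_m -> R) lam (y : 'cV[R]_m) :
  flow_objective d lam y = 2^-1 * (quadratic_cost d y + lam * l1_cost d y).
Proof.
rewrite /flow_objective; congr (_ * _); rewrite mulr_sumr -big_split /=.
by apply: eq_bigr => e _; rewrite mulrDr (mulrCA lam).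
Qed.

Lemma quadratic_cost_ge0 (R : realFieldType) m (d : 'I_m -> R) (y : 'cV[R]_m) :
  (forall e, 0 < d e) -> 0 <= quadratic_cost d y.
Proof. by move=> d_gt0; apply: sumr_ge0 => e _; apply: mulr_ge0; [exact: ltW | exact: sqr_ge0]. Qed.

Lemma is_flow_l1_cost_le (R : realFieldType) n m nl (src dst : 'I_m -> 'I_n)
    (d : 'I_m -> R) p lam x y : (forall e, 0 < d e) ->
  is_flow nl src dst d p lam x -> unlabeled_constraint nl src dst p y ->
  lam * l1_cost d x <= quadratic_cost d y + lam * l1_cost d y.
Proof.
move=> d_gt0 [_ x_min] feas_y; have := x_min y feas_y.
rewrite !flow_objectiveE ler_pM2l ?invr_gt0 //.
by have := quadratic_cost_ge0 x d_gt0; lra.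
Qed.

Lemma exists_edge_cost_lower_bound (R : realDomainType) m (d : 'I_m -> R) :
  (forall e, 0 < d e) -> exists2 c, 0 < c & forall e, c <= d e.
Proof.
move=> d_gt0; exists (\big[Num.min/1]_e d e); last by move=> e; exact: bigmin_le.
by apply: (big_ind (fun c => 0 < c)) => // a b a_gt0 b_gt0; rewrite lt_min a_gt0.
Qed.

Lemma exists_shortest_path_gap (R : realFieldType) n m nl (src dst : 'I_m -> 'I_n)
    (d : 'I_m -> R) p vs es :
  unique_shortest_labeled_path nl src dst d p vs es ->
  exists2 g, 0 < g & forall vs' es', labeled_path_to nl src dst p vs' es' ->
    (vs', es') <> (vs, es) -> path_cost d es + g <= path_cost d es'.
Proof.
move=> [_ shortest]; set other := fun P : seq 'I_n * seq 'I_m =>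
  labeled_path_to nl src dst p P.1 P.2 /\ P <> (vs, es).
case: (classic (exists2 P, P \in path_candidates n m & other P)) => [ex|none]; last first.
  exists 1 => // vs' es' path' ne'; case: none; exists (vs', es') => //.
  exact: path_in_candidates path'.1.
have [[vs' es'] [_ [path' ne'] min']] := exists_minimizer_in_seq (fun P => path_cost d P.2) ex.
exists (path_cost d es' - path_cost d es) => [|vs'' es'' path'' ne''].
  have [le' eq'] := shortest _ _ path'; rewrite subr_gt0 lt_neqAle le' andbT.
  by apply/eqP => cost_eq; apply: ne'; move: (eq' (esym cost_eq)) => /= [-> ->].
rewrite addrC subrK; apply: (min' (vs'', es'')) => //.
exact: path_in_candidates path''.1.
Qed.

Section Convergence.
Variables (R : realFieldType) (n m nl : nat) (src dst : 'I_m -> 'I_n) (d : 'I_m -> R).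
Variables (p : 'I_n) (vs : seq 'I_n) (es : seq 'I_m) (x : R -> 'cV[R]_m) (i : 'I_n).
Hypotheses (nl_gt0 : (0 < nl)%N) (nl_lt_n : (nl < n)%N).
Hypotheses (no_loop : forall e, src e != dst e) (conn : connected_graph src dst).
Hypotheses (d_gt0 : forall e, 0 < d e) (p_unl : (nl <= p)%N) (i_lab : (i < nl)%N).
Hypothesis shortest : unique_shortest_labeled_path nl src dst d p vs es.
Hypothesis flow : forall lam, 0 <= lam -> is_flow nl src dst d p lam (x lam).

Local Notation delta := ((i == head p vs)%:R : R).
Local Notation xs := (path_flow src vs es R).

Lemma path_flow_feasible : unlabeled_constraint nl src dst p xs.
Proof.
have [[path_vs [head_lab last_p]] _] := shortest.
move=> v v_unl; rewrite (path_flow_incidence no_loop path_vs R p) last_p.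
suff -> : (v == head p vs) = false by rewrite sub0r.
by apply/negbTE; apply: contraTneq head_lab => <-; rewrite -leqNgt.
Qed.

Lemma exists_separating_potentials : exists2 t, 0 < t & forall s, `|s| <= t ->
  exists phi, [/\ edge_lipschitz src dst d phi,
    forall j : 'I_n, (j < nl)%N -> phi j = if j == i then s else 0 &
    path_cost d es + s * delta <= phi p].
Proof.
have [c c_gt0 c_le] := exists_edge_cost_lower_bound d_gt0.
have [g g_gt0 gap] := exists_shortest_path_gap shortest.
have min_gt0 : 0 < Num.min c g by rewrite lt_min c_gt0.
exists (Num.min c g / 2) => [|s s_le]; first by rewrite divr_gt0.
set t := Num.min c g / 2; have t2 : 2 * t = Num.min c g by rewrite /t mulrC divfK ?pnatr_eq0.
set off := fun j : 'I_n => if j == i then s else 0.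
have off_le j : `|off j| <= t.
  by rewrite /off; case: ifP => _; rewrite ?normr0 // (le_trans (normr_ge0 s) s_le).
have d_ge e : 2 * t <= d e by rewrite t2 ge_min c_le.
have gap2 vs' es' : labeled_path_to nl src dst p vs' es' -> (vs', es') <> (vs, es) ->
    path_cost d es + 2 * t <= path_cost d es'.
  move=> path' ne'; apply: le_trans (gap _ _ path' ne').
  by rewrite lerD2l t2 ge_min lexx orbT.
have [phi dist_phi] := exists_offset_distance d off
  (connected_labeled_paths nl_gt0 nl_lt_n conn).
exists phi; split.
- exact: (offset_distance_lipschitz d_gt0 dist_phi).
- by move=> j j_lab; rewrite (offset_distance_labeled d_gt0 off_le d_ge dist_phi).
- apply: le_trans (offset_distance_target off_le dist_phi gap2).
  by rewrite /off eq_sym; case: eqP; rewrite ?mulr1 ?mulr0.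
Qed.

Lemma signed_weight_deviation_le lam s (phi : 'I_n -> R) : 0 < lam ->
  edge_lipschitz src dst d phi ->
  (forall j : 'I_n, (j < nl)%N -> phi j = if j == i then s else 0) ->
  path_cost d es + s * delta <= phi p ->
  lam * (s * (delta - flow_weight src dst (x lam) i)) <= quadratic_cost d xs.
Proof.
move=> lam_gt0 lip_phi phi_lab phi_p.
have [feas_x _] := flow (ltW lam_gt0).
have labeled_sum : \sum_(j < n | (j < nl)%N) phi j * flow_weight src dst (x lam) j =
    s * flow_weight src dst (x lam) i.
  rewrite (bigD1 i) //= phi_lab // eqxx big1 ?addr0 // => j /andP[j_lab j_i].
  by rewrite phi_lab // (negbTE j_i) mul0r.
have dual := labeled_potential_duality p_unl lip_phi feas_x.
rewrite labeled_sum in dual.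
have opt := is_flow_l1_cost_le d_gt0 (flow (ltW lam_gt0)) path_flow_feasible.
have xs_l1 := l1_cost_path_flow src vs es d_gt0.
move: dual opt xs_l1 phi_p; set w := flow_weight _ _ _ _; set D := path_cost d es.
set L := l1_cost d (x lam); set Ls := l1_cost d xs; move=> *; nra.
Qed.

Lemma flow_weight_deviation : exists2 t, 0 < t & forall lam, 0 < lam ->
  lam * t * `|flow_weight src dst (x lam) i - delta| <= quadratic_cost d xs.
Proof.
have [t t_gt0 potentials] := exists_separating_potentials.
exists t => // lam lam_gt0.
have bound s : `|s| <= t ->
    lam * (s * (delta - flow_weight src dst (x lam) i)) <= quadratic_cost d xs.
  move=> s_le; have [phi [lip_phi phi_lab phi_p]] := potentials s s_le.
  exact: signed_weight_deviation_le lip_phi phi_lab phi_p.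
have := bound t; have := bound (- t); rewrite normrN gtr0_norm // lexx => up low.
rewrite -[lam * t]gtr0_norm ?mulr_gt0 // -normrM ler_norml.
by have := up isT; have := low isT; move=> *; apply/andP; split; lra.
Qed.

End Convergence.

Theorem proposition2 (R : realFieldType) (n m nl : nat)
  (src dst : 'I_m -> 'I_n) (d : 'I_m -> R) (p : 'I_n)
  (vs : seq 'I_n) (es : seq 'I_m) (x : R -> 'cV[R]_m) :
  (1 <= nl)%N -> (nl < n)%N ->
  simple_graph src dst -> connected_graph src dst ->
  (forall e, 0 < d e) ->
  (nl <= p)%N ->
  unique_shortest_labeled_path nl src dst d p vs es ->
  (forall lam, 0 <= lam -> is_flow nl src dst d p lam (x lam)) ->
  forall i : 'I_n, (i < nl)%N ->
    forall eps : R, 0 < eps -> exists Lam : R, forall lam, Lam <= lam ->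
      `| flow_weight src dst (x lam) i - (i == head p vs)%:R | < eps.
Proof.
move=> nl_gt0 nl_lt_n [no_loop _] conn d_gt0 p_unl shortest flow i i_lab eps eps_gt0.
have [t t_gt0 deviation] :=
  flow_weight_deviation nl_gt0 nl_lt_n no_loop conn d_gt0 p_unl i_lab shortest flow.
set C := quadratic_cost d (path_flow src vs es R).
have C_ge0 : 0 <= C := quadratic_cost_ge0 _ d_gt0.
have teps_gt0 : 0 < t * eps := mulr_gt0 t_gt0 eps_gt0.
exists (C / (t * eps) + 1) => lam lam_ge.
have C_div_ge0 : 0 <= C / (t * eps) by apply: divr_ge0 => //; exact: ltW.
have lam_gt0 : 0 < lam by lra.
have C_lt : C < lam * t * eps by rewrite -mulrA -ltr_pdivrMr //; lra.
rewrite -(ltr_pM2l (mulr_gt0 lam_gt0 t_gt0)).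
exact: le_lt_trans (deviation lam lam_gt0) C_lt.
Qed.
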